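(* Let $G$ be a finite group, let $n\ge 1$ and let $m$ be odd. Suppose $G$ is $R_{2^n m}$ and $G$ has exactly $m(2^n-1)$ conjugacy classes containing involutions. Then for every central involution $z$ of $G$ and every involution $x\neq z$ of $G$, the element $xz$ is an involution that is not conjugate to $x$ in $G$.
   Context: For a finite group $G$, $\overline{G}=G\cup\{\infty\}$, and $K_V$ denotes the complete graph on vertex set $V$. $G$ acts on $\overline{G}$ by right multiplication, with $\infty g=\infty$ for all $g\in G$; for a subgraph $F$ of $K_{\overline{G}}$ and $g\in G$, $Fg$ is the graph obtained by replacing every vertex $v$ by $vg$. A $k$-factor of $K_V$ is a spanning $k$-regular subgraph, and a $k$-factorization is a set of $k$-factors whose edge sets partition the edge set of $K_V$. A $k$-factorization $\mathcal{F}$ of $K_{\overline{G}}$ is $1$-rotational if $Fg\in\mathcal{F}$ for all $F\in\mathcal{F}$ and $g\in G$. A finite group $G$ is called $R_k$ if there exists a $1$-rotational $k$-factorization of $K_{\overline{G}}$. An involution is an element of order $2$; a central involution is an involution in the center of $G$. *)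

From mathcomp Require Import all_boot all_fingroup all_solvable.
Set Implicit Arguments. Unset Strict Implicit. Unset Printing Implicit Defensive.
Local Open Scope group_scope.

Section OneRot.
Variable gT : finGroupType.

(* Vertex set \overline{G} = G ∪ {∞}, with ∞ represented by None. *)
Definition vtx := option gT.

Definition vact (v : vtx) (g : gT) : vtx :=
  match v with None => None | Some x => Some (x * g) end.

Definition is_edge (e : {set vtx}) : bool := #|e| == 2.
Definition all_edges : {set {set vtx}} := [set e | is_edge e].

(* A (spanning) subgraph of K_{\overline{G}} is given by its edge set. *)
Definition eact (e : {set vtx}) (g : gT) : {set vtx} := [set vact v g | v in e].
Definition gact (F : {set {set vtx}}) (g : gT) : {set {set vtx}} :=
  [set eact e g | e in F].

Definition degree (F : {set {set vtx}}) (v : vtx) : nat := #|[set e in F | v \in e]|.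

Definition is_kfactor (k : nat) (F : {set {set vtx}}) : bool :=
  (F \subset all_edges) && [forall v : vtx, degree F v == k].

Definition is_kfactorization (k : nat) (FF : {set {set {set vtx}}}) : bool :=
  [forall F in FF, is_kfactor k F] &&
  [forall F1 in FF, forall F2 in FF, (F1 != F2) ==> [disjoint F1 & F2]] &&
  (\bigcup_(F in FF) F == all_edges).

Definition one_rotational (FF : {set {set {set vtx}}}) : bool :=
  [forall F in FF, forall g : gT, gact F g \in FF].

Definition R_k (k : nat) : Prop :=
  exists FF : {set {set {set vtx}}}, is_kfactorization k FF && one_rotational FF.

End OneRot.

Definition involution (gT : finGroupType) (x : gT) : bool := #[x]%g == 2.

Definition n_invol_classes (gT : finGroupType) : nat :=
  #|[set C in classes [set: gT] | [exists x in C, involution x]]|.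

From mathcomp Require Import all_boot all_fingroup all_solvable zify.
Set Implicit Arguments. Unset Strict Implicit. Unset Printing Implicit Defensive.
Local Open Scope group_scope.

(* Let S be the stabiliser of the factor F0 containing the edge {oo, 1}. The
   edges of F0 at oo are exactly the {oo, g} with g in S, so |S| = k. For an
   involution t, the edge {1, t} lies in some factor F = F0 h, and t flips that
   edge, hence fixes F, so t is conjugate into S. Thus the involution classes
   of G are the classes of the involutions of S. As the m elements of S of
   order dividing m (Frobenius) are not involutions, S has at most
   2^n m - m = m (2^n - 1) involutions, so they must lie in pairwise distinct
   classes; but x and xz would give two conjugate involutions of S. *)

Section VertexAction.
Variable gT : finGroupType.

Lemma vact1 : (@vact gT)^~ 1 =1 id.
Proof. by case=> [x|] //=; rewrite mulg1. Qed.

Lemma vactM (v : vtx gT) : act_morph (@vact gT) v.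
Proof. by case: v => [x|] g h //=; rewrite mulgA. Qed.

Definition vtx_action := TotalAction vact1 vactM.

Lemma setact_pair (a b : vtx gT) g :
  (vtx_action^*)%act [set a; b] g = [set vact a g; vact b g].
Proof. by rewrite /= setactE imsetU1 imset_set1. Qed.

Lemma edge_through_inf (e : {set vtx gT}) :
  #|e| = 2 -> None \in e -> exists g, e = [set None; Some g].
Proof.
move/eqP/cards2P=> [[a|] [[b|] [ab ->]]] //; rewrite !inE //= => _.
by exists a; rewrite setUC.
by exists b.
Qed.

End VertexAction.

Section Involutions.
Variable gT : finGroupType.
Implicit Types x y : gT.

Lemma involutionE x : involution x = (x != 1) && (x ^+ 2 == 1).
Proof.
rewrite /involution -order_dvdn -order_eq1.
by case: #[x] (order_gt0 x) => [|[|[|d]]].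
Qed.

Lemma involutionJ x y : involution (x ^ y) = involution x.
Proof. by rewrite /involution orderJ. Qed.

Lemma involutionM x y :
  commute x y -> involution x -> involution y -> x != y -> involution (x * y).
Proof.
rewrite !involutionE => cxy /andP[_ /eqP x2] /andP[_ /eqP y2] neq_xy.
rewrite expgMn // x2 y2 mulg1 eqxx andbT; apply: contra neq_xy => /eqP xy1.
by rewrite -(mulgK y x) xy1 mul1g eq_invg_mul -expg2 y2.
Qed.

End Involutions.

Section RotationalFactorization.
Variables (gT : finGroupType) (k : nat) (FF : {set {set {set vtx gT}}}).
Hypotheses (FFk : is_kfactorization k FF) (FFrot : one_rotational FF).

Local Notation to := (vtx_action gT).
Local Notation fto := (to^*^*)%act.

Lemma factor_act (F : {set {set vtx gT}}) g : F \in FF -> fto F g \in FF.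
Proof. by move=> FF_F; apply: (forallP (forall_inP FFrot F FF_F)). Qed.

Lemma factor_kfactor (F : {set {set vtx gT}}) : F \in FF -> is_kfactor k F.
Proof. by case/andP: FFk => /andP[/forall_inP kF _] _ /kF. Qed.

Lemma factor_edge (F : {set {set vtx gT}}) (e : {set vtx gT}) :
  F \in FF -> e \in F -> #|e| = 2.
Proof.
by case/factor_kfactor/andP=> /subsetP sF _ /sF; rewrite inE => /eqP.
Qed.

Lemma factor_degree (F : {set {set vtx gT}}) (v : vtx gT) :
  F \in FF -> degree F v = k.
Proof. by case/factor_kfactor/andP=> _ /forallP/(_ v)/eqP. Qed.

Lemma factor_eq (F1 F2 : {set {set vtx gT}}) (e : {set vtx gT}) :
  F1 \in FF -> F2 \in FF -> e \in F1 -> e \in F2 -> F1 = F2.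
Proof.
move=> FF1 FF2 eF1 eF2; apply/eqP; apply: contraT => neF.
case/andP: FFk => /andP[_ /forall_inP/(_ F1 FF1)/forall_inP/(_ F2 FF2)] + _.
by rewrite neF => /disjointFr/(_ eF1); rewrite eF2.
Qed.

Lemma edge_in_factor (e : {set vtx gT}) :
  #|e| = 2 -> exists2 F, F \in FF & e \in F.
Proof.
move=> e2; case/andP: FFk => _ /eqP; rewrite /all_edges => /setP/(_ e).
by rewrite inE /is_edge e2 eqxx => /bigcupP[F]; exists F.
Qed.

Variable F0 : {set {set vtx gT}}.
Hypotheses (FF0 : F0 \in FF) (F0_inf1 : [set None; Some 1] \in F0).

Local Notation S := 'C[F0 | fto].

Lemma act_inf_edge g : [set None; Some g] \in fto F0 g.
Proof. by have := mem_setact (to^*)%act g F0_inf1; rewrite setact_pair /= mul1g. Qed.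

Lemma inf_edge_stab g : ([set None; Some g] \in F0) = (g \in S).
Proof.
apply/idP/astab1P => [eF0 | <-]; last exact: act_inf_edge.
by apply: factor_eq (act_inf_edge g) eF0; rewrite ?factor_act.
Qed.

Lemma inf_edges_factor :
  [set e in F0 | None \in e] = [set [set None; Some g] | g in S].
Proof.
apply/setP=> e; rewrite inE; apply/andP/imsetP => [[eF0 Ne] | [g Sg ->]].
  have [g def_e] := edge_through_inf (factor_edge FF0 eF0) Ne.
  by exists g; rewrite // -inf_edge_stab -def_e.
by rewrite inf_edge_stab Sg !inE eqxx.
Qed.

Lemma card_factor_stab : #|S| = k.
Proof.
rewrite -(factor_degree None FF0) /degree inf_edges_factor card_imset //.
by move=> g h /setP/(_ (Some g)); rewrite !inE eqxx /= => /esym/eqP[].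
Qed.

Lemma involution_conj_factor_stab t : involution t -> exists h, t ^ h \in S.
Proof.
rewrite involutionE => /andP[t1 /eqP t2].
have [F FF_F tF] : exists2 F, F \in FF & [set Some 1; Some t] \in F.
  by apply: edge_in_factor; rewrite cards2 (inj_eq Some_inj) eq_sym t1.
have [e /[!inE] /andP[eF Ne]] : exists e, e \in [set e in F | None \in e].
  apply/card_gt0P; rewrite -/(degree F None) (factor_degree _ FF_F).
  by rewrite -card_factor_stab cardG_gt0.
have [h def_e] := edge_through_inf (factor_edge FF_F eF) Ne.
have def_F : F = fto F0 h.
  by apply: factor_eq (act_inf_edge h) => //; rewrite ?factor_act -?def_e.
have t_fixes_F : t \in 'C[F | fto].
  apply/astab1P/(factor_eq (factor_act t FF_F) FF_F _ tF).
  by have := mem_setact (to^*)%act t tF; rewrite setact_pair /= mul1g -expg2 t2 setUC.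
by exists h^-1; rewrite -mem_conjg -astab1_act -def_F.
Qed.

End RotationalFactorization.

Lemma R_k_conj_subgroup (gT : finGroupType) k : R_k gT k ->
  exists2 S : {group gT}, #|S| = k & forall t, involution t -> exists h, t ^ h \in S.
Proof.
case=> FF /andP[FFk FFrot].
have [|F0 FF0 F0_inf1] := edge_in_factor FFk (e := [set None; Some 1]).
  by rewrite cards2.
exists 'C[F0 | ((vtx_action gT)^*^*)%act]%G.
  exact: (card_factor_stab FFk FFrot FF0 F0_inf1).
exact: (involution_conj_factor_stab FFk FFrot FF0 F0_inf1).
Qed.

Section InvolutionClasses.
Variable gT : finGroupType.
Implicit Types (x y : gT) (S : {group gT}).

Definition involutions (A : {set gT}) := [set x in A | involution x].

Lemma card_involutions_odd S m :
  odd m -> (m %| #|S|)%N -> (#|involutions S| + m <= #|S|)%N.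
Proof.
move=> odd_m m_dvd_S.
have m_le_Ldiv : (m <= #|'Ldiv_m(S)|)%N.
  apply: dvdn_leq (Frobenius_Ldiv m_dvd_S); apply/card_gt0P; exists 1.
  by apply/LdivP; rewrite group1 expg1n.
have disj : involutions S :&: 'Ldiv_m(S) = set0.
  apply/setP=> x; rewrite !inE; apply/negP => /and3P[/andP[_ /eqP x2] _].
  by rewrite -order_dvdn x2 dvdn2 odd_m.
rewrite -(leq_add2l #|involutions S|) in m_le_Ldiv; apply: leq_trans m_le_Ldiv _.
rewrite -cardsUI disj cards0 addn0 subset_leq_card //.
by apply/subsetP=> x; rewrite !inE => /orP[] /andP[].
Qed.

Lemma involution_classesE S :
    (forall t, involution t -> exists h, t ^ h \in S) ->
  [set C in classes [set: gT] | [exists x in C, involution x]] =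
    class^~ [set: gT] @: involutions S.
Proof.
move=> S_conj; apply/setP=> C; rewrite inE.
apply/andP/imsetP => [[] | [x /[!inE] /andP[Sx x2] ->]].
  case/imsetP=> y _ -> /exists_inP[t /class_eqP def_t t2].
  have [h Sth] := S_conj t t2.
  exists (t ^ h); first by rewrite inE Sth involutionJ.
  by rewrite classGidl ?inE // def_t.
split; first exact: mem_classes.
by apply/exists_inP; exists x; rewrite ?class_refl.
Qed.

Lemma n_invol_classes_lt S x y :
    (forall t, involution t -> exists h, t ^ h \in S) ->
    x \in involutions S -> y \in involutions S -> x != y ->
    x ^: [set: gT] = y ^: [set: gT] ->
  (n_invol_classes gT < #|involutions S|)%N.
Proof.
move=> S_conj Sx Sy neq_xy xy_conj.
rewrite /n_invol_classes (involution_classesE S_conj) ltn_neqAle leq_imset_card andbT.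
by apply: contra neq_xy => /imset_injP/(_ x y Sx Sy xy_conj)->.
Qed.

End InvolutionClasses.

Theorem theorem2p6 (gT : finGroupType) (n m : nat) :
  (0 < n)%N -> odd m ->
  R_k gT (2 ^ n * m) ->
  n_invol_classes gT = (m * (2 ^ n - 1))%N ->
  forall z : gT, z \in 'Z([set: gT]) -> involution z ->
  forall x : gT, involution x -> x != z ->
    involution (x * z) /\ x * z \notin x ^: [set: gT].
Proof.
move=> _ odd_m RG n_classes z /centerP[_ cGz] z2 x x2 neq_xz.
have xz2 : involution (x * z) by apply: involutionM => //; apply/esym/cGz/in_setT.
split=> //; apply/negP => /class_eqP xz_conj.
have zJ (g : gT) : z ^ g = z by rewrite conjgE cGz ?inE // mulKg.
have [S card_S S_conj] := R_k_conj_subgroup RG.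
have [h Sxh] := S_conj x x2.
have Sz : z \in S by have [g] := S_conj z z2; rewrite zJ.
have Sxh2 : x ^ h \in involutions S by rewrite inE Sxh involutionJ.
have Sxzh2 : (x * z) ^ h \in involutions S.
  by rewrite inE involutionJ xz2 conjMg zJ groupM.
have neq_conj : x ^ h != (x * z) ^ h.
  rewrite (inj_eq (conjg_inj h)) -{1}[x]mulg1 (inj_eq (mulgI x)) eq_sym.
  by move: z2; rewrite involutionE => /andP[].
have := n_invol_classes_lt S_conj Sxh2 Sxzh2 neq_conj.
rewrite !classGidl ?inE // xz_conj => /(_ erefl).
have := card_involutions_odd (S := S) odd_m.
rewrite card_S dvdn_mull // n_classes => /(_ isT).
nia.
Qed.
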